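(* For every $n\ge1$ and all $\Delta,\Delta'\in\mathcal{P}_n$: if for every $i\in\mathbb{Z}_n$ we have $d_\Delta(i)=d_{\Delta'}(i)\neq\mathbb{Z}_n$, then $\Delta\equiv\Delta'$.
   Context: Cells are indexed by $\mathbb{Z}_n=\{0,\dots,n-1\}$, indices modulo $n$. An update schedule is an ordered partition $\Delta=(\Delta_1,\dots,\Delta_k)$ of $\mathbb{Z}_n$ into nonempty blocks; $\mathcal{P}_n$ is the set of them. For $u,v\in\mathbb{Z}_n$ with $u\in\Delta_a$, $v\in\Delta_b$, $lab_\Delta((u,v))=\oplus$ if $b\le a$ and $\ominus$ if $a<b$. Define $d^{\leftarrow}_\Delta(i)=\max\{k\in\mathbb{N}:\forall j,\,0<j<k\Rightarrow lab_\Delta((i-j,i-j+1))=\ominus\}$, $d^{\rightarrow}_\Delta(i)=\max\{k\in\mathbb{N}:\forall j,\,0<j<k\Rightarrow lab_\Delta((i+j,i+j-1))=\ominus\}$, and $d_\Delta(i)=\{i-k \bmod n: 0\le k\le d^{\leftarrow}_\Delta(i)\}\cup\{i+k\bmod n:0\le k\le d^{\rightarrow}_\Delta(i)\}$. Two schedules are equivalent, $\Delta\equiv\Delta'$, iff $lab_\Delta$ and $lab_{\Delta'}$ agree on every arc $(i,i+1)$ and $(i+1,i)$, $i\in\mathbb{Z}_n$. *)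

From mathcomp Require Import all_boot.
Set Implicit Arguments. Unset Strict Implicit. Unset Printing Implicit Defensive.

(* Cells of Z_n are represented by 'I_n; a natural number k denotes the
   cell k mod n. *)

(* An update schedule is an ordered partition of Z_n into nonempty blocks,
   given as the sequence of its blocks (Delta_1, ..., Delta_k). *)
Definition is_schedule (n : nat) (D : seq {set 'I_n}) : Prop :=
  all (fun B => B != set0) D /\ (forall x : 'I_n, count (fun B : {set 'I_n} => x \in B) D = 1).

Definition blk (n : nat) (D : seq {set 'I_n}) (k : nat) : nat :=
  find (fun B : {set 'I_n} => [exists x in B, nat_of_ord x == k %% n]) D.

(* lab_D((u,v)) = (+) iff b <= a, where u in Delta_a, v in Delta_b;
   true encodes (+), false encodes (-). *)
Definition lab (n : nat) (D : seq {set 'I_n}) (u v : nat) : bool :=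
  blk D v <= blk D u.

Definition subm (n i j : nat) : nat := i + (n - j %% n).

(* k satisfies the defining condition of d^<-_D(i):
   forall j, 0 < j < k -> lab((i-j, i-j+1)) = (-). *)
Definition left_ok (n : nat) (D : seq {set 'I_n}) (i k : nat) : Prop :=
  forall j, 0 < j < k -> lab D (subm n i j) (subm n i j).+1 = false.

(* k satisfies the defining condition of d^->_D(i):
   forall j, 0 < j < k -> lab((i+j, i+j-1)) = (-). *)
Definition right_ok (n : nat) (D : seq {set 'I_n}) (i k : nat) : Prop :=
  forall j, 0 < j < k -> lab D (i + j) (i + j.-1) = false.

(* Membership in d_D(i) = {i-k : 0<=k<=d^<-(i)} u {i+k : 0<=k<=d^->(i)}.
   Since left_ok/right_ok are downward closed in k, "k <= max{k | ok k}"
   is the same as "ok k"; when the max does not exist (unbounded), this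
   gives the whole of Z_n. *)
Definition in_d (n : nat) (D : seq {set 'I_n}) (i x : 'I_n) : Prop :=
  (exists k, left_ok D i k /\ (x + k) %% n = i %% n) \/
  (exists k, right_ok D i k /\ x = (i + k) %% n :> nat).

Definition sched_equiv (n : nat) (D D' : seq {set 'I_n}) : Prop :=
  forall i : 'I_n, lab D i i.+1 = lab D' i i.+1 /\ lab D i.+1 i = lab D' i.+1 i.

(** The neighbourhood d(i) always contains i-1, i and i+1, and it reaches
    i-2 (resp. i+2) through the left (resp. right) run exactly when the arc
    (i-1, i) (resp. (i+1, i)) is labelled (-).  The only other way to reach
    i-2 is a right run of length at least n-2, which together with i-1
    covers all of Z_n; symmetrically for i+2.  So, as long as d(i) is a
    proper subset of Z_n (which forces n > 3), the labels of the two arcs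
    entering i are read off d(i), and equal neighbourhoods give equal
    labels. *)

From mathcomp Require Import all_boot zify.

Set Implicit Arguments.
Unset Strict Implicit.
Unset Printing Implicit Defensive.

Lemma leq_of_eqmod (m k n : nat) : m < n -> k = m %[mod n] -> m <= k.
Proof. by move=> lt_mn eq_km; rewrite -(modn_small lt_mn) -eq_km leq_mod. Qed.

Lemma leq_of_eqmod0 (k n : nat) : 0 < k -> k = 0 %[mod n] -> n <= k.
Proof. by move=> k_gt0 eq_k0; apply: dvdn_leq k_gt0 _; rewrite /dvdn eq_k0 mod0n. Qed.

Lemma eqmodS (n u v : nat) : u = v %[mod n] -> u.+1 = v.+1 %[mod n].
Proof. by move=> /eqP eq_uv; apply/eqP; rewrite -[u.+1]addn1 -[v.+1]addn1 eqn_modDr. Qed.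

Lemma forward_step_or_pred (n : nat) (a b : 'I_n) :
  b.+1 %% n = a \/ exists2 k, k <= n - 2 & (a + k) %% n = b.
Proof.
have := ltn_ord a; have := ltn_ord b.
case: (leqP a b) => [le_ab|lt_ba] b_lt a_lt.
- case: (leqP (b - a) (n - 2)) => step.
  + by right; exists (b - a) => //; rewrite subnKC // modn_small.
  + by left; rewrite (_ : b.+1 = n) ?modnn; lia.
- case: (leqP (b + n - a) (n - 2)) => step.
  + right; exists (b + n - a) => //.
    by rewrite (_ : a + _ = b + n) ?modnDr ?modn_small //; lia.
  + by left; rewrite modn_small; lia.
Qed.

Lemma bool_eq_false_iff (a b : bool) : (a = false <-> b = false) -> a = b.
Proof. by case: a b => [] [] // [to_b to_a]; [have := to_a erefl | have := to_b erefl]. Qed.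

Section Neighbourhood.

Variables (n : nat) (D : seq {set 'I_n}).

Lemma lab_eqmod (u1 u2 v1 v2 : nat) :
  u1 = u2 %[mod n] -> v1 = v2 %[mod n] -> lab D u1 v1 = lab D u2 v2.
Proof. by move=> eq_u eq_v; rewrite /lab /blk eq_u eq_v. Qed.

Lemma left_ok_le (i k k' : nat) : left_ok D i k -> k' <= k -> left_ok D i k'.
Proof. by move=> ok le_k j /andP [j_gt0 lt_jk]; apply: ok; rewrite j_gt0 (leq_trans lt_jk). Qed.

Lemma right_ok_le (i k k' : nat) : right_ok D i k -> k' <= k -> right_ok D i k'.
Proof. by move=> ok le_k j /andP [j_gt0 lt_jk]; apply: ok; rewrite j_gt0 (leq_trans lt_jk). Qed.

Lemma left_ok1 (i : nat) : left_ok D i 1.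
Proof. by case=> [|[]]. Qed.

Lemma right_ok1 (i : nat) : right_ok D i 1.
Proof. by case=> [|[]]. Qed.

Lemma in_d_pred (i x : 'I_n) : x.+1 %% n = i -> in_d D i x.
Proof. by move=> eq_xi; left; exists 1; split; [exact: left_ok1 | rewrite addn1 eq_xi modn_small]. Qed.

Lemma in_d_succ (i x : 'I_n) : i.+1 %% n = x -> in_d D i x.
Proof. by move=> eq_ix; right; exists 1; split; [exact: right_ok1 | rewrite addn1 eq_ix]. Qed.

Lemma in_d_all_of_right_ok (i x : 'I_n) : right_ok D i (n - 2) -> in_d D i x.
Proof.
move=> ok; have [/in_d_pred //|[k le_k eq_x]] := forward_step_or_pred i x.
by right; exists k; split; [exact: right_ok_le ok le_k | rewrite eq_x].
Qed.

Lemma in_d_all_of_left_ok (i x : 'I_n) : left_ok D i (n - 2) -> in_d D i x.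
Proof.
move=> ok; have [/in_d_succ //|[k le_k eq_i]] := forward_step_or_pred x i.
by left; exists k; split; [exact: left_ok_le ok le_k | rewrite eq_i modn_small].
Qed.

Lemma gt3_of_not_in_d (i x : 'I_n) : ~ in_d D i x -> 3 < n.
Proof.
move=> not_in; rewrite ltnNge; apply/negP => le_n3; apply: not_in.
by apply: in_d_all_of_right_ok; apply: right_ok_le (right_ok1 i) _; lia.
Qed.

Lemma in_d_pred2_iff (i : nat) (p x : 'I_n) :
  (exists y, ~ in_d D p y) -> p = i.+1 %[mod n] -> x.+2 = p %[mod n] ->
  in_d D p x <-> lab D i i.+1 = false.
Proof.
move=> [y not_in] eq_p eq_x; have n_gt2 := ltnW (gt3_of_not_in_d not_in).
have lab_pred : lab D (subm n p 1) (subm n p 1).+1 = lab D i i.+1.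
  have eq_pred : subm n p 1 = i %[mod n].
    rewrite /subm (modn_small (ltnW n_gt2)) -modnDml eq_p modnDml.
    by rewrite (_ : i.+1 + _ = i + n) ?modnDr //; lia.
  by apply: lab_eqmod => //; apply: eqmodS.
split.
- case=> [[k [ok eq_xk]] | [k [ok eq_x_pk]]].
  + have k_ge2 : 2 <= k.
      apply: leq_of_eqmod n_gt2 _; apply/eqP.
      by rewrite -(eqn_modDl x) eq_xk -eq_x addn2.
    by rewrite -lab_pred; apply: ok; lia.
  + exfalso; apply: not_in; apply: in_d_all_of_right_ok; apply: right_ok_le ok _.
    suff : n <= k.+2 by lia.
    apply: leq_of_eqmod0 => //; apply/eqP.
    by rewrite -(eqn_modDl p) addn0 !addnS -addn2 -modnDml -eq_x_pk addn2 eq_x.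
- move=> lab_false; left; exists 2; split; last by rewrite addn2.
  by move=> j j_lt; rewrite (_ : j = 1) ?lab_pred //; lia.
Qed.

Lemma in_d_succ2_iff (p x : 'I_n) :
  (exists y, ~ in_d D p y) -> x = p.+2 %[mod n] ->
  in_d D p x <-> lab D p.+1 p = false.
Proof.
move=> [y not_in] eq_x; have n_gt2 := ltnW (gt3_of_not_in_d not_in); split.
- case=> [[k [ok eq_xk]] | [k [ok eq_x_pk]]].
  + exfalso; apply: not_in; apply: in_d_all_of_left_ok; apply: left_ok_le ok _.
    suff : n <= k.+2 by lia.
    apply: leq_of_eqmod0 => //; apply/eqP.
    by rewrite -(eqn_modDl p) addn0 -addSnnS -addSnnS -modnDml -eq_x modnDml eq_xk.
  + have k_ge2 : 2 <= k.
      apply: leq_of_eqmod n_gt2 _; apply/eqP.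
      by rewrite -(eqn_modDl p) -eq_x_pk addn2 -eq_x modn_small.
    by have := ok 1; rewrite addn1 addn0; apply.
- move=> lab_false; right; exists 2; split; last by rewrite addn2 -eq_x modn_small.
  by move=> j j_lt; rewrite (_ : j = 1) ?addn1 /= ?addn0 //; lia.
Qed.

End Neighbourhood.

Theorem mainTheorem11 (n : nat) (D D' : seq {set 'I_n}) :
  1 <= n -> is_schedule D -> is_schedule D' ->
  (forall i : 'I_n,
     (forall x : 'I_n, in_d D i x <-> in_d D' i x) /\
     (exists x : 'I_n, ~ in_d D i x)) ->
  sched_equiv D D'.
Proof.
move=> _ _ _ same_d i.
have n_gt0 : 0 < n by apply: leq_ltn_trans (ltn_ord i).
have proper p : exists y, ~ in_d D p y by case: (same_d p).
have proper' p : exists y, ~ in_d D' p y.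
  by have [eq_d [y not_in]] := same_d p; exists y; rewrite -eq_d.
split; apply: bool_eq_false_iff.
- pose p := Ordinal (ltn_pmod i.+1 n_gt0).
  pose x := Ordinal (ltn_pmod (i + n.-1) n_gt0).
  have eq_p : p = i.+1 %[mod n] by rewrite modn_mod.
  have eq_x : x.+2 = p %[mod n].
    rewrite /= -addn2 modnDml modn_mod (_ : _ + 2 = i.+1 + n) ?modnDr //; lia.
  rewrite -(in_d_pred2_iff (proper p) eq_p eq_x).
  by rewrite -(in_d_pred2_iff (proper' p) eq_p eq_x); case: (same_d p).
- pose x := Ordinal (ltn_pmod i.+2 n_gt0).
  have eq_x : x = i.+2 %[mod n] by rewrite modn_mod.
  rewrite -(in_d_succ2_iff (proper i) eq_x).
  by rewrite -(in_d_succ2_iff (proper' i) eq_x); case: (same_d i).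
Qed.
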